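(* Let $\mathfrak{F}$ be an anchor ring (torus of revolution) in $\mathbb{E}^3$, i.e. the tube $\boldsymbol{x}(u,\phi)=\boldsymbol{a}(u)+r\cos\phi\,\boldsymbol{h}(u)+r\sin\phi\,\boldsymbol{b}(u)$ about a plane circle $\boldsymbol{a}$ of constant curvature $\kappa>0$ (torsion $\tau=0$), with $0<r<1/\kappa$. Let $W$ be any open portion of $\mathfrak{F}$ on which $\cos\phi\neq 0$ (equivalently, the Gauss curvature $K\neq 0$). Then there is no constant real $3\times 3$ matrix $A$ such that the Gauss map $\boldsymbol{N}$ of $\mathfrak{F}$ satisfies $\Delta^{II}\boldsymbol{N}=A\boldsymbol{N}$ on $W$; that is, the anchor ring is of coordinate infinite type Gauss map with respect to the second fundamental form. *)

From Stdlib Require Import Reals.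
From Coquelicot Require Import Coquelicot.
Open Scope R_scope.

Record V3 := mkV { c1 : R; c2 : R; c3 : R }.

Definition vadd (a b : V3) : V3 := mkV (c1 a + c1 b) (c2 a + c2 b) (c3 a + c3 b).
Definition vscale (k : R) (a : V3) : V3 := mkV (k * c1 a) (k * c2 a) (k * c3 a).
Definition vdot (a b : V3) : R := c1 a * c1 b + c2 a * c2 b + c3 a * c3 b.
Definition vcross (a b : V3) : V3 :=
  mkV (c2 a * c3 b - c3 a * c2 b) (c3 a * c1 b - c1 a * c3 b) (c1 a * c2 b - c2 a * c1 b).
Definition vnorm (a : V3) : R := sqrt (vdot a a).

Record M3 := mkM { row1 : V3; row2 : V3; row3 : V3 }.
Definition matvec (A : M3) (v : V3) : V3 :=
  mkV (vdot (row1 A) v) (vdot (row2 A) v) (vdot (row3 A) v).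

Definition pu (f : R -> R -> R) (u v : R) : R := Derive (fun s => f s v) u.
Definition pv (f : R -> R -> R) (u v : R) : R := Derive (fun t => f u t) v.
Definition dU (X : R -> R -> V3) (u v : R) : V3 :=
  mkV (pu (fun s t => c1 (X s t)) u v) (pu (fun s t => c2 (X s t)) u v)
      (pu (fun s t => c3 (X s t)) u v).
Definition dV (X : R -> R -> V3) (u v : R) : V3 :=
  mkV (pv (fun s t => c1 (X s t)) u v) (pv (fun s t => c2 (X s t)) u v)
      (pv (fun s t => c3 (X s t)) u v).

Definition gauss_map (X : R -> R -> V3) (u v : R) : V3 :=
  let n := vcross (dU X u v) (dV X u v) in vscale (/ vnorm n) n.

Definition IIL (X : R -> R -> V3) (u v : R) : R := vdot (dU (dU X) u v) (gauss_map X u v).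
Definition IIM (X : R -> R -> V3) (u v : R) : R := vdot (dV (dU X) u v) (gauss_map X u v).
Definition IIN (X : R -> R -> V3) (u v : R) : R := vdot (dV (dV X) u v) (gauss_map X u v).
Definition IIdet (X : R -> R -> V3) (u v : R) : R :=
  IIL X u v * IIN X u v - IIM X u v * IIM X u v.

(* Laplace operator of the (non-degenerate) second fundamental form:
   Delta^II f = - 1/sqrt|h| * sum_{ij} d_i ( sqrt|h| h^{ij} d_j f ),
   h = II, h^{ij} its inverse matrix. *)
Definition lapII (X : R -> R -> V3) (f : R -> R -> R) (u v : R) : R :=
  let w := fun s t => sqrt (Rabs (IIdet X s t)) in
  let h11 := fun s t => IIN X s t / IIdet X s t in
  let h12 := fun s t => - IIM X s t / IIdet X s t in
  let h22 := fun s t => IIL X s t / IIdet X s t in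
  - / w u v *
    ( pu (fun s t => w s t * (h11 s t * pu f s t + h12 s t * pv f s t)) u v
    + pv (fun s t => w s t * (h12 s t * pu f s t + h22 s t * pv f s t)) u v ).

Definition lapII_vec (X : R -> R -> V3) (F : R -> R -> V3) (u v : R) : V3 :=
  mkV (lapII X (fun s t => c1 (F s t)) u v) (lapII X (fun s t => c2 (F s t)) u v)
      (lapII X (fun s t => c3 (F s t)) u v).

(* The anchor ring: tube of radius r about the plane circle a of curvature kappa
   (arc-length parametrized), with center c, in the plane spanned by the
   orthonormal vectors e1, e2:
     a(u) = c + (1/kappa)(cos(kappa u) e1 + sin(kappa u) e2),
     h(u) = -(cos(kappa u) e1 + sin(kappa u) e2)   (principal normal),
     b    = e1 x e2                                 (binormal, tau = 0),
     x(u,phi) = a(u) + r cos phi h(u) + r sin phi b. *)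
Definition circ_a (kappa : R) (c e1 e2 : V3) (u : R) : V3 :=
  vadd c (vscale (/ kappa) (vadd (vscale (cos (kappa * u)) e1) (vscale (sin (kappa * u)) e2))).
Definition circ_h (kappa : R) (e1 e2 : V3) (u : R) : V3 :=
  vscale (-1) (vadd (vscale (cos (kappa * u)) e1) (vscale (sin (kappa * u)) e2)).
Definition circ_b (e1 e2 : V3) : V3 := vcross e1 e2.

Definition anchor_ring (kappa r : R) (c e1 e2 : V3) (u phi : R) : V3 :=
  vadd (circ_a kappa c e1 e2 u)
       (vadd (vscale (r * cos phi) (circ_h kappa e1 e2 u))
             (vscale (r * sin phi) (circ_b e1 e2))).

Definition open2 (W : R -> R -> Prop) : Prop :=
  forall u v, W u v -> exists e, 0 < e /\
    forall u' v', Rabs (u' - u) < e -> Rabs (v' - v) < e -> W u' v'.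

(* Write the torus in the orthonormal frame (e1, e2, b = e1 x e2)
   centred at c:  x(u,t) = c + rho(t) (cos(ku) e1 + sin(ku) e2) + r sin t b,
   with rho(t) = 1/k - r cos t > 0.  In frame coordinates the Gauss map is
   N = cos t (cos(ku) e1 + sin(ku) e2) - sin t b, and the second fundamental
   form is diagonal: L = -rho k^2 cos t, M = 0, N = r.  A direct computation of
   the Laplacian of II then gives
       Delta^II N = H(t) (cos(ku) e1 + sin(ku) e2) + g(t) b,
       g(t) = sin t (4 r cos t - 3/k) / (2 r rho(t)).
   If Delta^II N = A N on W, pairing with b gives, with m = A^T b,
       g(t) = cos t cos(ku) (m.e1) + cos t sin(ku) (m.e2) - sin t (m.b).
   The left side does not depend on u, so varying u in a small interval kills
   the harmonic terms: g(t) = -sigma sin t with sigma = m.b on an interval of t.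
   Since g(t)/sin t is a non-constant Moebius function of cos t, two points with
   nonzero sine and distinct cosines give a contradiction. *)

From Stdlib Require Import Reals Lra FunctionalExtensionality.
From Coquelicot Require Import Coquelicot.
Open Scope R_scope.

Ltac funext2 u t :=
  apply functional_extensionality; intro u; apply functional_extensionality; intro t.

Lemma V3_ext (v w : V3) : c1 v = c1 w -> c2 v = c2 w -> c3 v = c3 w -> v = w.
Proof. destruct v, w; simpl; intros; subst; reflexivity. Qed.

Lemma sin_cos_sq (x : R) : sin x * sin x + cos x * cos x = 1.
Proof. exact (sin2_cos2 x). Qed.

Lemma is_derive_affine (f g h : R -> R) (x f' g' h' o a b c : R) :
  is_derive f x f' -> is_derive g x g' -> is_derive h x h' ->
  is_derive (fun y => o + (f y * a + g y * b + h y * c)) x (0 + (f' * a + g' * b + h' * c)).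
Proof.
  intros Hf Hg Hh.
  apply (is_derive_plus (fun _ => o)); [exact (@is_derive_const R_AbsRing R_NormedModule o x) |].
  apply (is_derive_plus (fun y => f y * a + g y * b) (fun y => h y * c));
    [apply (is_derive_plus (fun y => f y * a) (fun y => g y * b)) |].
  - exact (is_derive_scal_l f x f' a Hf).
  - exact (is_derive_scal_l g x g' b Hg).
  - exact (is_derive_scal_l h x h' c Hh).
Qed.

Lemma normalize_scaled (a : R) (n : V3) :
  0 < a -> vdot n n = 1 -> vscale (/ vnorm (vscale a n)) (vscale a n) = n.
Proof.
  intros Ha Hn.
  assert (Hnorm : vnorm (vscale a n) = a).
  { unfold vnorm. replace (vdot (vscale a n) (vscale a n)) with (a * a * vdot n n)
      by (unfold vdot, vscale; simpl; ring).
    rewrite Hn, Rmult_1_r; apply sqrt_square; lra. }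
  rewrite Hnorm; apply V3_ext; unfold vscale; simpl; field; lra.
Qed.

Definition transpose_apply (A : M3) (w : V3) : V3 :=
  mkV (c1 w * c1 (row1 A) + c2 w * c1 (row2 A) + c3 w * c1 (row3 A))
      (c1 w * c2 (row1 A) + c2 w * c2 (row2 A) + c3 w * c2 (row3 A))
      (c1 w * c3 (row1 A) + c2 w * c3 (row2 A) + c3 w * c3 (row3 A)).

Lemma vdot_matvec (A : M3) (w v : V3) : vdot w (matvec A v) = vdot (transpose_apply A w) v.
Proof. unfold matvec, transpose_apply, vdot; simpl; ring. Qed.

Definition zeroV : V3 := mkV 0 0 0.

Definition frame (e1 e2 c : V3) (x y z : R) : V3 :=
  mkV (c1 c + (x * c1 e1 + y * c1 e2 + z * c1 (vcross e1 e2)))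
      (c2 c + (x * c2 e1 + y * c2 e2 + z * c2 (vcross e1 e2)))
      (c3 c + (x * c3 e1 + y * c3 e2 + z * c3 (vcross e1 e2))).

Section Frame.
Variables e1 e2 : V3.

Lemma frame_coords_ext (c : V3) (x y z x' y' z' : R) : x = x' -> y = y' -> z = z' ->
  frame e1 e2 c x y z = frame e1 e2 c x' y' z'.
Proof. intros; subst; reflexivity. Qed.

Lemma dU_frame (c : V3) (x y z x' y' z' : R -> R -> R) :
  (forall s t, is_derive (fun s => x s t) s (x' s t)) ->
  (forall s t, is_derive (fun s => y s t) s (y' s t)) ->
  (forall s t, is_derive (fun s => z s t) s (z' s t)) ->
  dU (fun s t => frame e1 e2 c (x s t) (y s t) (z s t)) =
  fun s t => frame e1 e2 zeroV (x' s t) (y' s t) (z' s t).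
Proof.
  intros Hx Hy Hz; funext2 s t.
  unfold dU, pu, frame; simpl; f_equal; apply is_derive_unique;
    apply (is_derive_affine (fun s => x s t) (fun s => y s t) (fun s => z s t)); auto.
Qed.

Lemma dV_frame (c : V3) (x y z x' y' z' : R -> R -> R) :
  (forall s t, is_derive (fun t => x s t) t (x' s t)) ->
  (forall s t, is_derive (fun t => y s t) t (y' s t)) ->
  (forall s t, is_derive (fun t => z s t) t (z' s t)) ->
  dV (fun s t => frame e1 e2 c (x s t) (y s t) (z s t)) =
  fun s t => frame e1 e2 zeroV (x' s t) (y' s t) (z' s t).
Proof.
  intros Hx Hy Hz; funext2 s t.
  unfold dV, pv, frame; simpl; f_equal; apply is_derive_unique;
    apply (is_derive_affine (fun t => x s t) (fun t => y s t) (fun t => z s t)); auto.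
Qed.

Lemma frame_scale (a x y z : R) :
  vscale a (frame e1 e2 zeroV x y z) = frame e1 e2 zeroV (a * x) (a * y) (a * z).
Proof. apply V3_ext; unfold frame, zeroV; simpl; ring. Qed.

Lemma vdot_frame (m : V3) (x y z : R) :
  vdot m (frame e1 e2 zeroV x y z) = x * vdot m e1 + y * vdot m e2 + z * vdot m (vcross e1 e2).
Proof. unfold vdot, frame, zeroV; simpl; ring. Qed.

Hypotheses (H11 : vdot e1 e1 = 1) (H22 : vdot e2 e2 = 1) (H12 : vdot e1 e2 = 0).

Lemma frame_dot (x y z x' y' z' : R) :
  vdot (frame e1 e2 zeroV x y z) (frame e1 e2 zeroV x' y' z') = x * x' + y * y' + z * z'.
Proof.
  transitivity (x * x' + y * y' + z * z' + x * x' * (vdot e1 e1 - 1) + y * y' * (vdot e2 e2 - 1)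
     + (x * y' + y * x') * vdot e1 e2
     + z * z' * (vdot e1 e1 * vdot e2 e2 - vdot e1 e2 * vdot e1 e2 - 1)).
  - unfold vdot, frame, zeroV, vcross; simpl; ring.
  - rewrite H11, H22, H12; ring.
Qed.

Lemma frame_cross (x y z x' y' z' : R) :
  vcross (frame e1 e2 zeroV x y z) (frame e1 e2 zeroV x' y' z') =
  frame e1 e2 zeroV (y * z' - z * y') (z * x' - x * z') (x * y' - y * x').
Proof.
  apply V3_ext;
  (match goal with |- ?j (vcross _ _) = ?j ?rhs =>
     transitivity (j rhs + (x * z' - z * x') * (j e1 * vdot e1 e2 - j e2 * (vdot e1 e1 - 1))
                         + (y * z' - z * y') * (j e1 * (vdot e2 e2 - 1) - j e2 * vdot e1 e2))
   end;
   [ unfold vdot, vcross, frame, zeroV; simpl; ring | rewrite H11, H22, H12; ring ]).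
Qed.

Lemma vdot_binormal_frame (x y z : R) : vdot (vcross e1 e2) (frame e1 e2 zeroV x y z) = z.
Proof.
  replace (vcross e1 e2) with (frame e1 e2 zeroV 0 0 1) at 1
    by (apply V3_ext; unfold frame, zeroV; simpl; ring).
  rewrite frame_dot; ring.
Qed.

End Frame.

Definition torus_normal (e1 e2 : V3) (k u t : R) : V3 :=
  frame e1 e2 zeroV (cos t * cos (k * u)) (cos t * sin (k * u)) (- sin t).

(* The coefficients of [Delta^II N] along the horizontal direction
   [cos(ku) e1 + sin(ku) e2] and along the binormal [e1 x e2]. *)
Definition horizontal_coef (k r v : R) : R :=
  - / (/ k - r * cos v)
  + (cos v + sin v * sin v * (2 * r * cos v - / k) / (2 * (/ k - r * cos v) * cos v)) / r.
Definition binormal_coef (k r v : R) : R :=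
  sin v * (4 * r * cos v - 3 * / k) / (2 * r * (/ k - r * cos v)).

(* Needed to differentiate [sqrt |det II|]: [sign x] is [|x| / x] away from 0. *)
Lemma sign_as_ratio (x : R) : x <> 0 -> sign x = Rabs x / x.
Proof.
  intro Hx; destruct (Rle_or_lt 0 x) as [H|H].
  - rewrite sign_eq_1, Rabs_pos_eq by lra; field; auto.
  - rewrite sign_eq_m1, Rabs_left by lra; field; auto.
Qed.

Section AnchorRing.
Variables (k r : R) (c e1 e2 : V3).
Local Notation X := (anchor_ring k r c e1 e2).

Lemma anchor_ring_frame : X =
  fun u t => frame e1 e2 c ((/ k - r * cos t) * cos (k * u)) ((/ k - r * cos t) * sin (k * u))
                           (r * sin t).
Proof.
  funext2 u t.
  unfold anchor_ring, circ_a, circ_h, circ_b, frame, vadd, vscale; simpl; f_equal; ring.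
Qed.

Lemma dU_anchor_ring : dU X = fun u t =>
  frame e1 e2 zeroV (- ((/ k - r * cos t) * (k * sin (k * u))))
                    ((/ k - r * cos t) * (k * cos (k * u))) 0.
Proof. rewrite anchor_ring_frame; apply dU_frame; intros; auto_derive; auto; ring. Qed.

Lemma dV_anchor_ring : dV X = fun u t =>
  frame e1 e2 zeroV (r * sin t * cos (k * u)) (r * sin t * sin (k * u)) (r * cos t).
Proof. rewrite anchor_ring_frame; apply dV_frame; intros; auto_derive; auto; ring. Qed.

Lemma dUU_anchor_ring : dU (dU X) = fun u t =>
  frame e1 e2 zeroV (- ((/ k - r * cos t) * (k * (k * cos (k * u)))))
                    (- ((/ k - r * cos t) * (k * (k * sin (k * u))))) 0.
Proof. rewrite dU_anchor_ring; apply dU_frame; intros; auto_derive; auto; ring. Qed.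

Lemma dVU_anchor_ring : dV (dU X) = fun u t =>
  frame e1 e2 zeroV (- (r * sin t * (k * sin (k * u)))) (r * sin t * (k * cos (k * u))) 0.
Proof. rewrite dU_anchor_ring; apply dV_frame; intros; auto_derive; auto; ring. Qed.

Lemma dVV_anchor_ring : dV (dV X) = fun u t =>
  frame e1 e2 zeroV (r * cos t * cos (k * u)) (r * cos t * sin (k * u)) (- (r * sin t)).
Proof. rewrite dV_anchor_ring; apply dV_frame; intros; auto_derive; auto; ring. Qed.

Lemma pu_normal_coord (a b d : R) :
  pu (fun s t => 0 + (cos t * cos (k * s) * a + cos t * sin (k * s) * b + - sin t * d)) =
  fun s t => cos t * (- (k * sin (k * s))) * a + cos t * (k * cos (k * s)) * b.
Proof. funext2 s t; unfold pu; apply is_derive_unique; auto_derive; auto; ring. Qed.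

Lemma pv_normal_coord (a b d : R) :
  pv (fun s t => 0 + (cos t * cos (k * s) * a + cos t * sin (k * s) * b + - sin t * d)) =
  fun s t => - sin t * cos (k * s) * a - sin t * sin (k * s) * b - cos t * d.
Proof. funext2 s t; unfold pv; apply is_derive_unique; auto_derive; auto; ring. Qed.

Hypotheses (Hk : 0 < k) (Hr : 0 < r) (Hrk : r < / k).

(* [rho(t) = 1/k - r cos t] is the distance to the axis of revolution. *)
Lemma axis_dist_pos (t : R) : 0 < / k - r * cos t.
Proof. assert (Hc := COS_bound t). nra. Qed.

(* The form [1 - r k cos t = k rho(t)] produced by [field]. *)
Lemma scaled_axis_dist_pos (t : R) : 0 < 1 - r * cos t * k.
Proof.
  replace (1 - r * cos t * k) with (k * (/ k - r * cos t)) by (field; lra).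
  assert (Hd := axis_dist_pos t); nra.
Qed.

Hypotheses (H11 : vdot e1 e1 = 1) (H22 : vdot e2 e2 = 1) (H12 : vdot e1 e2 = 0).

Lemma torus_normal_unit (u t : R) :
  vdot (torus_normal e1 e2 k u t) (torus_normal e1 e2 k u t) = 1.
Proof.
  unfold torus_normal; rewrite frame_dot by auto.
  transitivity (sin t * sin t + cos t * cos t * (sin (k * u) * sin (k * u) + cos (k * u) * cos (k * u)));
    [ring | now rewrite sin_cos_sq, Rmult_1_r, sin_cos_sq].
Qed.

(* [x_u x x_v = rho k r N], so the Gauss map is [N]. *)
Lemma gauss_map_anchor_ring : gauss_map X = torus_normal e1 e2 k.
Proof.
  funext2 u t.
  assert (Hcross : vcross (dU X u t) (dV X u t) =
                   vscale ((/ k - r * cos t) * k * r) (torus_normal e1 e2 k u t)).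
  { rewrite dU_anchor_ring, dV_anchor_ring, frame_cross by auto.
    unfold torus_normal; rewrite frame_scale; apply frame_coords_ext; try ring.
    transitivity (- ((/ k - r * cos t) * k * r * sin t) *
                  (sin (k * u) * sin (k * u) + cos (k * u) * cos (k * u)));
      [ring | rewrite sin_cos_sq; ring]. }
  unfold gauss_map; cbv zeta; rewrite Hcross.
  apply normalize_scaled; [| exact (torus_normal_unit u t)].
  assert (Hd := axis_dist_pos t); apply Rmult_lt_0_compat; [apply Rmult_lt_0_compat|]; lra.
Qed.

Lemma IIL_anchor_ring : IIL X = fun u t => - ((/ k - r * cos t) * (k * k)) * cos t.
Proof.
  funext2 u t.
  unfold IIL; rewrite dUU_anchor_ring, gauss_map_anchor_ring; unfold torus_normal.
  rewrite frame_dot by auto.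
  transitivity (- ((/ k - r * cos t) * (k * k)) * cos t *
                (sin (k * u) * sin (k * u) + cos (k * u) * cos (k * u)));
    [ring | rewrite sin_cos_sq; ring].
Qed.

Lemma IIM_anchor_ring : IIM X = fun u t => 0.
Proof.
  funext2 u t.
  unfold IIM; rewrite dVU_anchor_ring, gauss_map_anchor_ring; unfold torus_normal.
  rewrite frame_dot by auto; ring.
Qed.

Lemma IIN_anchor_ring : IIN X = fun u t => r.
Proof.
  funext2 u t.
  unfold IIN; rewrite dVV_anchor_ring, gauss_map_anchor_ring; unfold torus_normal.
  rewrite frame_dot by auto.
  transitivity (r * (sin t * sin t + cos t * cos t *
                      (sin (k * u) * sin (k * u) + cos (k * u) * cos (k * u))));
    [ring | now rewrite sin_cos_sq, Rmult_1_r, sin_cos_sq, Rmult_1_r].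
Qed.

Lemma IIdet_anchor_ring : IIdet X = fun u t => - ((/ k - r * cos t) * (k * k)) * cos t * r.
Proof.
  funext2 u t.
  unfold IIdet; rewrite IIL_anchor_ring, IIM_anchor_ring, IIN_anchor_ring; ring.
Qed.

(* The weight [w = sqrt |det II|] is the only
   non-rational quantity; its derivative involves [sign (det II) = |det II| / det II]
   and [|det II| = w^2], after which the identity is rational. *)
Lemma lapII_normal_coord (a b d u v : R) : cos v <> 0 ->
  lapII X (fun s t => 0 + (cos t * cos (k * s) * a + cos t * sin (k * s) * b + - sin t * d)) u v
  = horizontal_coef k r v * (cos (k * u) * a + sin (k * u) * b) + binormal_coef k r v * d.
Proof.
  intros Hcv.
  assert (Hrho := axis_dist_pos v).
  assert (Hdet : - ((/ k - r * cos v) * (k * k)) * cos v * r <> 0).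
  { apply Rmult_integral_contrapositive; split; [|lra].
    apply Rmult_integral_contrapositive; split; [|auto].
    apply Ropp_neq_0_compat, Rmult_integral_contrapositive; split; nra. }
  unfold lapII; rewrite pu_normal_coord, pv_normal_coord, IIdet_anchor_ring, IIL_anchor_ring,
    IIM_anchor_ring, IIN_anchor_ring.
  cbv beta zeta; unfold pu, pv.
  match goal with |- context [Derive ?f u] =>
    let HU := fresh in eassert (HU : is_derive f u _) by (auto_derive; [auto | reflexivity]);
    rewrite (is_derive_unique _ _ _ HU); clear HU end.
  match goal with |- context [Derive ?f v] =>
    let HV := fresh in eassert (HV : is_derive f v _)
      by (auto_derive; [repeat split; try exact Hdet; now apply Rabs_pos_lt | reflexivity]);
    rewrite (is_derive_unique _ _ _ HV); clear HV end.
  unfold Rminus in *.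
  rewrite (sign_as_ratio _ Hdet).
  assert (Hw : 0 < sqrt (Rabs (- ((/ k + - (r * cos v)) * (k * k)) * cos v * r)))
    by now apply sqrt_lt_R0, Rabs_pos_lt.
  set (w := sqrt (Rabs (- ((/ k + - (r * cos v)) * (k * k)) * cos v * r))) in *.
  assert (Hww : w * w = Rabs (- ((/ k + - (r * cos v)) * (k * k)) * cos v * r))
    by (apply sqrt_sqrt, Rabs_pos).
  rewrite <- Hww; clearbody w.
  match goal with |- ?x = ?y => change (@eq R x y) end.
  unfold horizontal_coef, binormal_coef; field.
  assert (Hkrho := scaled_axis_dist_pos v).
  repeat split; try lra; auto.
Qed.

Lemma lapII_gauss_map (u v : R) : cos v <> 0 ->
  lapII_vec X (gauss_map X) u v =
  frame e1 e2 zeroV (horizontal_coef k r v * cos (k * u)) (horizontal_coef k r v * sin (k * u))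
                    (binormal_coef k r v).
Proof.
  intro Hcv; rewrite gauss_map_anchor_ring; unfold lapII_vec, torus_normal.
  apply V3_ext; cbn [c1 c2 c3];
  (match goal with |- lapII _ (fun s t => ?j (frame _ _ _ _ _ _)) _ _ = _ =>
     transitivity (horizontal_coef k r v * (cos (k * u) * j e1 + sin (k * u) * j e2)
                   + binormal_coef k r v * j (vcross e1 e2));
     [exact (lapII_normal_coord (j e1) (j e2) (j (vcross e1 e2)) u v Hcv)
     | unfold frame, zeroV; simpl; ring]
   end).
Qed.

Lemma binormal_relation (A : M3) (u v : R) : cos v <> 0 ->
  lapII_vec X (gauss_map X) u v = matvec A (gauss_map X u v) ->
  let m := transpose_apply A (vcross e1 e2) in
  binormal_coef k r v = cos v * cos (k * u) * vdot m e1 + cos v * sin (k * u) * vdot m e2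
                        - sin v * vdot m (vcross e1 e2).
Proof.
  intros Hcv Heq m; apply (f_equal (vdot (vcross e1 e2))) in Heq.
  rewrite lapII_gauss_map, vdot_binormal_frame, vdot_matvec, gauss_map_anchor_ring in Heq by auto.
  unfold torus_normal in Heq; rewrite vdot_frame in Heq.
  rewrite Heq; unfold m; ring.
Qed.

End AnchorRing.

Lemma cos_sin_three_points (h P Q a d : R) : cos d <> 1 ->
  h = P * cos a + Q * sin a -> h = P * cos (a + d) + Q * sin (a + d) ->
  h = P * cos (a - d) + Q * sin (a - d) -> h = 0.
Proof.
  intros Hd E0 Ep Em.
  rewrite cos_plus, sin_plus in Ep; rewrite cos_minus, sin_minus in Em.
  assert (Hsum : h * (1 - cos d) = 0).
  { transitivity (((h - (P * (cos a * cos d - sin a * sin d) + Q * (sin a * cos d + cos a * sin d)))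
      + (h - (P * (cos a * cos d + sin a * sin d) + Q * (sin a * cos d - cos a * sin d)))
      - 2 * cos d * (h - (P * cos a + Q * sin a))) / 2);
      [field | rewrite <- E0, <- Ep, <- Em; field]. }
  destruct (Rmult_integral _ _ Hsum); [auto | lra].
Qed.

Lemma cos_lt_1_small (x : R) : 0 < x <= 1 -> cos x < 1.
Proof.
  intro Hx; replace x with (2 * (x / 2)) by field; rewrite cos_2a_sin.
  assert (0 < sin (x / 2)) by (apply sin_gt_0; assert (H := PI2_1); lra).
  nra.
Qed.

Lemma harmonic_const_vanishes (k e u0 h P Q : R) : 0 < k -> 0 < e ->
  (forall u, Rabs (u - u0) < e -> h = P * cos (k * u) + Q * sin (k * u)) -> h = 0.
Proof.
  intros Hk He Hh.
  set (d := Rmin (e / 2) (/ k)).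
  assert (Hd : 0 < d) by (apply Rmin_glb_lt; [lra | now apply Rinv_0_lt_compat]).
  assert (Hde : d < e) by (assert (Rmin (e / 2) (/ k) <= e / 2) by apply Rmin_l; unfold d; lra).
  assert (Hkd : k * d <= 1).
  { replace 1 with (k * / k) by (field; lra); apply Rmult_le_compat_l; [lra | apply Rmin_r]. }
  apply (cos_sin_three_points h P Q (k * u0) (k * d)).
  - assert (cos (k * d) < 1) by (apply cos_lt_1_small; split; nra). lra.
  - apply Hh; rewrite Rminus_diag, Rabs_R0; lra.
  - replace (k * u0 + k * d) with (k * (u0 + d)) by ring.
    apply Hh; replace (u0 + d - u0) with d by ring; rewrite Rabs_pos_eq; lra.
  - replace (k * u0 - k * d) with (k * (u0 - d)) by ring.
    apply Hh; replace (u0 - d - u0) with (- d) by ring; rewrite Rabs_Ropp, Rabs_pos_eq; lra.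
Qed.

Lemma small_angle (e : R) : 0 < e -> exists eta, 0 < eta < e /\ 0 < sin eta /\ 0 < cos eta.
Proof.
  intro He; exists (Rmin (e / 2) 1).
  assert (Hpi := PI2_1).
  assert (Rmin (e / 2) 1 <= e / 2) by apply Rmin_l.
  assert (Rmin (e / 2) 1 <= 1) by apply Rmin_r.
  assert (0 < Rmin (e / 2) 1) by (apply Rmin_glb_lt; lra).
  repeat split; try lra; [apply sin_gt_0 | apply cos_gt_0]; lra.
Qed.

Lemma sin_nonzero_nearby (p e : R) : cos p <> 0 -> 0 < e ->
  exists q, Rabs (q - p) < e /\ sin q <> 0.
Proof.
  intros Hc He.
  destruct (Req_dec (sin p) 0) as [Hs | Hs]; [| exists p; rewrite Rminus_diag, Rabs_R0; auto].
  destruct (small_angle e He) as [eta [Heta [Hsin _]]].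
  exists (p + eta); split.
  - replace (p + eta - p) with eta by ring; rewrite Rabs_pos_eq; lra.
  - rewrite sin_plus, Hs, Rmult_0_l, Rplus_0_l.
    apply Rmult_integral_contrapositive; split; lra.
Qed.

Lemma nearby_point_new_cos (p e : R) : cos p <> 0 -> sin p <> 0 -> 0 < e ->
  exists q, Rabs (q - p) < e /\ sin q <> 0 /\ cos q <> cos p.
Proof.
  intros Hc Hs He.
  destruct (small_angle e He) as [eta [Heta [Hsin Hcos]]].
  assert (Hsc : 0 < sin p * sin p) by (apply Rsqr_pos_lt; auto).
  assert (Hcc : 0 < cos p * cos p) by (apply Rsqr_pos_lt; auto).
  assert (Hcb := COS_bound eta).
  assert (Hdir : exists t, Rabs t < e /\ cos t = cos eta /\ 0 < sin p * cos p * sin t).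
  { destruct (Rlt_dec 0 (sin p * cos p)) as [Hpos | Hneg].
    - exists eta; rewrite Rabs_pos_eq by lra; repeat split; [lra | nra].
    - assert (sin p * cos p <> 0) by (apply Rmult_integral_contrapositive; auto).
      exists (- eta); rewrite Rabs_Ropp, Rabs_pos_eq, cos_neg, sin_neg by lra.
      repeat split; [lra | nra]. }
  destruct Hdir as [t [Ht [Hct Hst]]].
  exists (p + t); replace (p + t - p) with t by ring; repeat split; auto.
  - rewrite sin_plus; intro E.
    assert (sin p * (sin p * cos t + cos p * sin t) = 0) by (rewrite E; ring). nra.
  - rewrite cos_plus; intro E.
    assert (cos p * (cos p - (cos p * cos t - sin p * sin t)) = 0) by (rewrite E; ring). nra.
Qed.

(* [binormal_coef v / sin v] is a non-constant Moebius function of [cos v],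
   so it cannot equal the same constant at two points with distinct cosines. *)
Lemma binormal_coef_not_sine_multiple (k r sigma v1 v2 : R) :
  0 < k -> 0 < r -> r < / k -> sin v1 <> 0 -> sin v2 <> 0 -> cos v1 <> cos v2 ->
  binormal_coef k r v1 = - sigma * sin v1 -> binormal_coef k r v2 = - sigma * sin v2 -> False.
Proof.
  intros Hk Hr Hrk Hs1 Hs2 Hc E1 E2.
  (* dividing by [sin v / (2 r rho(v))] leaves a relation affine in [cos v] *)
  assert (Haffine : forall v, sin v <> 0 -> binormal_coef k r v = - sigma * sin v ->
            4 * r * cos v - 3 * / k + 2 * r * sigma * (/ k - r * cos v) = 0).
  { intros v Hs E.
    assert (Hrho : 0 < / k - r * cos v) by (apply axis_dist_pos; lra).
    assert (Hprod : sin v * (4 * r * cos v - 3 * / k + 2 * r * sigma * (/ k - r * cos v)) = 0).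
    { assert (Hkrho : 0 < 1 - r * cos v * k) by (apply scaled_axis_dist_pos; lra).
      transitivity (2 * r * (/ k - r * cos v) * (binormal_coef k r v + sigma * sin v));
        [unfold binormal_coef; field; repeat split; lra | rewrite E; ring]. }
    destruct (Rmult_integral _ _ Hprod); [contradiction | auto]. }
  apply Haffine in E1; apply Haffine in E2; auto.
  (* the two affine relations force [r sigma = 2], and then [/ k = 0] *)
  assert (Hsig : (cos v1 - cos v2) * (r * (4 - 2 * r * sigma)) = 0) by lra.
  destruct (Rmult_integral _ _ Hsig) as [Hcos | Hrsig]; [apply Hc; lra |].
  assert (Hrs : r * sigma = 2) by nra.
  assert (Hk' : 0 < / k) by (apply Rinv_0_lt_compat; lra).
  replace (2 * r * sigma * (/ k - r * cos v1)) with (2 * (r * sigma) * (/ k - r * cos v1)) in E1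
    by ring.
  rewrite Hrs in E1; lra.
Qed.

Lemma open_set_point_with_sin_nonzero (W : R -> R -> Prop) (u0 p0 : R) :
  open2 W -> W u0 p0 -> (forall u phi, W u phi -> cos phi <> 0) ->
  exists p, W u0 p /\ sin p <> 0.
Proof.
  intros HW Hw0 Hcos.
  destruct (HW u0 p0 Hw0) as [e [He Hbox]].
  destruct (sin_nonzero_nearby p0 e (Hcos u0 p0 Hw0) He) as [q [Hq Hs]].
  exists q; split; [apply Hbox; [rewrite Rminus_diag, Rabs_R0 |] |]; auto.
Qed.

Theorem corollary1 (kappa r : R) (c e1 e2 : V3) (W : R -> R -> Prop) :
  0 < kappa -> 0 < r -> r < / kappa ->
  vdot e1 e1 = 1 -> vdot e2 e2 = 1 -> vdot e1 e2 = 0 ->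
  open2 W -> (exists u phi, W u phi) ->
  (forall u phi, W u phi -> cos phi <> 0) ->
  ~ (exists A : M3, forall u phi, W u phi ->
       lapII_vec (anchor_ring kappa r c e1 e2) (gauss_map (anchor_ring kappa r c e1 e2)) u phi
       = matvec A (gauss_map (anchor_ring kappa r c e1 e2) u phi)).
Proof.
  intros Hk Hr Hrk H11 H22 H12 HW [u0 [p0 Hw0]] Hcos [A HA].
  set (m := transpose_apply A (vcross e1 e2)).
  set (sigma := vdot m (vcross e1 e2)).
  destruct (open_set_point_with_sin_nonzero W u0 p0 HW Hw0 Hcos) as [p [Hwp Hsp]].
  destruct (HW u0 p Hwp) as [e [He Hbox]].
  (* along the vertical segment through (u0, p), varying u kills the harmonic
     terms: [binormal_coef] is a constant multiple of [sin] there *)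
  assert (Hline : forall v, Rabs (v - p) < e -> binormal_coef kappa r v = - sigma * sin v).
  { intros v Hv.
    enough (binormal_coef kappa r v + sigma * sin v = 0) by lra.
    apply (harmonic_const_vanishes kappa e u0 _ (cos v * vdot m e1) (cos v * vdot m e2) Hk He).
    intros u Hu.
    assert (Hwuv : W u v) by auto.
    rewrite (binormal_relation kappa r c e1 e2 Hk Hr Hrk H11 H22 H12 A u v (Hcos u v Hwuv)
               (HA u v Hwuv)).
    unfold sigma, m; ring. }
  destruct (nearby_point_new_cos p e (Hcos u0 p Hwp) Hsp He) as [q [Hq [Hsq Hcq]]].
  apply (binormal_coef_not_sine_multiple kappa r sigma p q Hk Hr Hrk Hsp Hsq (not_eq_sym Hcq)).
  - apply Hline; rewrite Rminus_diag, Rabs_R0; lra.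
  - now apply Hline.
Qed.
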